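(* Let $q>0$ with $q\neq1$, let $y:\mathbb{R}\to\mathbb{R}^2$ be a $2\pi$-periodic $C^2$ map, and let $\eta\in\mathbb{S}^1$. Define $\psi_\eta(\theta,\theta_\xi)=(\sqrt{q}\,\eta+\xi)\cdot y(\theta)$ and $\Psi_\eta(\theta,\theta_\xi)=-(\sqrt{q}\,\eta-\xi)\cdot y'(\theta)^\perp$, where $\xi=(\cos\theta_\xi,\sin\theta_\xi)^T$. If $(\theta,\theta_\xi)$ satisfies $\partial\psi_\eta/\partial\theta(\theta,\theta_\xi)=(\sqrt{q}\,\eta+\xi)\cdot y'(\theta)=0$, then $\Psi_\eta(\theta,\theta_\xi)=0$ if and only if $y'(\theta)=0$.
   Context: For $x=(x_1,x_2)^T\in\mathbb{R}^2$, $x^\perp=(-x_2,x_1)^T$. *)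

From Stdlib Require Import Reals.
From Coquelicot Require Import Coquelicot.
Open Scope R_scope.

Definition vec2 := (R * R)%type.
Definition dot (u v : vec2) : R := fst u * fst v + snd u * snd v.
Definition perp (x : vec2) : vec2 := (- snd x, fst x).
Definition vadd (u v : vec2) : vec2 := (fst u + fst v, snd u + snd v).
Definition vsub (u v : vec2) : vec2 := (fst u - fst v, snd u - snd v).
Definition vscal (a : R) (u : vec2) : vec2 := (a * fst u, a * snd u).

Definition C2fun (f : R -> R) : Prop :=
  forall x, ex_derive f x /\ ex_derive (Derive f) x /\
            continuous (Derive (Derive f)) x.

Definition periodic_C2_map (y : R -> vec2) : Prop :=
  (forall t, y (t + 2 * PI) = y t) /\
  C2fun (fun t => fst (y t)) /\ C2fun (fun t => snd (y t)).

Definition dy (y : R -> vec2) (t : R) : vec2 :=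
  (Derive (fun s => fst (y s)) t, Derive (fun s => snd (y s)) t).

Definition unit_circle (eta : vec2) : Prop := fst eta ^ 2 + snd eta ^ 2 = 1.

Definition xi_of (thxi : R) : vec2 := (cos thxi, sin thxi).

Definition psi_eta (q : R) (y : R -> vec2) (eta : vec2) (th thxi : R) : R :=
  dot (vadd (vscal (sqrt q) eta) (xi_of thxi)) (y th).

Definition Psi_eta (q : R) (y : R -> vec2) (eta : vec2) (th thxi : R) : R :=
  - dot (vsub (vscal (sqrt q) eta) (xi_of thxi)) (perp (dy y th)).

(* With [a = sqrt q eta + xi] and [b = sqrt q eta - xi] one has
   [a . b = q |eta|^2 - |xi|^2 = q - 1], which is nonzero.  A vector [d]
   orthogonal to [a] and to [b^perp] must then vanish, since
   [(a . b) d] is a linear combination of [a . d] and [b . d^perp]. *)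
From Stdlib Require Import Reals Lra.
From Coquelicot Require Import Coquelicot.
Open Scope R_scope.

Lemma dot_vadd_vsub (u v : vec2) : dot (vadd u v) (vsub u v) = dot u u - dot v v.
Proof. unfold dot, vadd, vsub; simpl; ring. Qed.

Lemma dot_vscal_vscal (a b : R) (u v : vec2) :
  dot (vscal a u) (vscal b v) = a * b * dot u v.
Proof. unfold dot, vscal; simpl; ring. Qed.

Lemma dot_xi_of (t : R) : dot (xi_of t) (xi_of t) = 1.
Proof.
  unfold dot, xi_of; simpl.
  rewrite <- (sin2_cos2 t); unfold Rsqr; ring.
Qed.

Lemma unit_circle_dot (eta : vec2) : unit_circle eta -> dot eta eta = 1.
Proof. unfold unit_circle, dot; intros <-; ring. Qed.

Lemma dot_sum_diff_unit (q : R) (eta : vec2) (thxi : R) :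
  0 <= q -> unit_circle eta ->
  dot (vadd (vscal (sqrt q) eta) (xi_of thxi))
      (vsub (vscal (sqrt q) eta) (xi_of thxi)) = q - 1.
Proof.
  intros hq hu.
  rewrite dot_vadd_vsub, dot_vscal_vscal, sqrt_sqrt, unit_circle_dot, dot_xi_of
    by assumption.
  ring.
Qed.

Lemma orth_perp_orth_eq0 (a b d : vec2) :
  dot a b <> 0 -> dot a d = 0 -> dot b (perp d) = 0 -> d = (0, 0).
Proof.
  destruct a as [a1 a2], b as [b1 b2], d as [d1 d2].
  unfold dot, perp; simpl; intros hab had hbd.
  assert (h1 : (a1 * b1 + a2 * b2) * d1 = 0).
  { replace ((a1 * b1 + a2 * b2) * d1)
      with (b1 * (a1 * d1 + a2 * d2) + a2 * (b1 * - d2 + b2 * d1)) by ring.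
    rewrite had, hbd; ring. }
  assert (h2 : (a1 * b1 + a2 * b2) * d2 = 0).
  { replace ((a1 * b1 + a2 * b2) * d2)
      with (b2 * (a1 * d1 + a2 * d2) - a1 * (b1 * - d2 + b2 * d1)) by ring.
    rewrite had, hbd; ring. }
  apply Rmult_integral in h1 as [h1 | ->]; [contradiction |].
  apply Rmult_integral in h2 as [h2 | ->]; [contradiction | reflexivity].
Qed.

Lemma dot_perp_0 (b : vec2) : dot b (perp (0, 0)) = 0.
Proof. unfold dot, perp; simpl; ring. Qed.

Theorem lemma1 (q : R) (y : R -> vec2) (eta : vec2) (th thxi : R) :
  0 < q -> q <> 1 -> periodic_C2_map y -> unit_circle eta ->
  Derive (fun t => psi_eta q y eta t thxi) th = 0 ->
  dot (vadd (vscal (sqrt q) eta) (xi_of thxi)) (dy y th) = 0 ->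
  (Psi_eta q y eta th thxi = 0 <-> dy y th = (0, 0)).
Proof.
  intros hq hq1 _ hu _ hcrit.
  unfold Psi_eta.
  split.
  - intro hPsi.
    apply (orth_perp_orth_eq0 (vadd (vscal (sqrt q) eta) (xi_of thxi))
                              (vsub (vscal (sqrt q) eta) (xi_of thxi))).
    + rewrite dot_sum_diff_unit by (assumption || lra); lra.
    + exact hcrit.
    + lra.
  - intros ->; rewrite dot_perp_0; ring.
Qed.
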